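(* Let $n$ be a positive integer and $g=3n+1$. If $G$ is a pure $(2n)$-sparse gapset of genus $g$, then $G$ is not pseudo-symmetric.
   Context: A gapset is a finite set $G\subset\mathbb{N}=\{1,2,\dots\}$ such that whenever $z\in G$ and $z=x+y$ with $x,y\in\mathbb{N}$, then $x\in G$ or $y\in G$; its genus is $g=\#G$. Writing $G=\{\ell_1<\dots<\ell_g\}$, the Frobenius number is $F(G)=\ell_g$; $G$ is pseudo-symmetric if $F(G)=2g-2$. $G$ is pure $\kappa$-sparse if $\ell_{i+1}-\ell_i\le\kappa$ for all $i$ with equality for some $i$. *)

From mathcomp Require Import all_boot.

(* A finite subset G of N = {1,2,...} is represented by the list of its
   elements in strictly increasing order: G = [:: l_1; ...; l_g]. *)

Definition is_gapset (G : seq nat) : Prop :=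
  sorted ltn G /\
  (forall z, z \in G -> 0 < z) /\
  (forall x y, 0 < x -> 0 < y -> x + y \in G -> x \in G \/ y \in G).

Definition genus (G : seq nat) : nat := size G.

(* Frobenius number: the largest element l_g (0 for the empty gapset). *)
Definition frobenius (G : seq nat) : nat := last 0 G.

Definition pseudo_symmetric (G : seq nat) : Prop :=
  frobenius G = 2 * genus G - 2.

Definition pure_sparse (kappa : nat) (G : seq nat) : Prop :=
  (forall i, i.+1 < size G -> nth 0 G i.+1 - nth 0 G i <= kappa) /\
  (exists i, i.+1 < size G /\ nth 0 G i.+1 - nth 0 G i = kappa).

From mathcomp Require Import all_boot.
From mathcomp Require Import zify.

(* Let F = 2m be the Frobenius number of a pseudo-symmetric gapset of genus
   m + 1.  Since F = y + (F - y) is a gap, the m gaps below F and their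
   reflections y |-> F - y cover [1, F - 1]; counting then shows that m is the
   only x with both x and F - x gaps.

   Now take F = 6n and consecutive gaps a < a + 2n.  Every 0 < k < 2n is a
   gap, since a + 2n - k is not; 3n is a gap; and 2n is a gap as soon as 4n is.
   So a + 1 >= 2n, and a = 2n - 1 is impossible because 6n = 2n + 4n.  As 3n
   does not lie strictly between a and a + 2n, a >= 3n.  Then either
   a + 2n < 6n and 6n - (a + 2n) < 2n is a gap, or a = 4n and 2n is a gap:
   both give a second pair of complementary gaps. *)

Lemma sorted_ltn_nth_mono {s : seq nat} : sorted ltn s ->
  {in [pred j | j < size s] &, {mono nth 0 s : j k / j < k}}.
Proof. by move=> s_sorted; apply/leqW_mono_in/leq_mono_in/sorted_ltn_nth/s_sorted/ltn_trans. Qed.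

Lemma sorted_ltn_notin_between (s : seq nat) (i y : nat) :
  sorted ltn s -> i.+1 < size s -> nth 0 s i < y < nth 0 s i.+1 -> y \notin s.
Proof.
move=> s_sorted i_lt /andP[lt_iy lt_yi1]; apply/negP => /(nthP 0)[j j_lt yE].
have mono := sorted_ltn_nth_mono s_sorted.
rewrite -yE mono ?inE // in lt_iy; last exact: ltnW.
by rewrite -yE mono ?inE // in lt_yi1; lia.
Qed.

Lemma sorted_ltn_le_last (s : seq nat) (y : nat) :
  sorted ltn s -> y \in s -> y <= last 0 s.
Proof.
move=> /(sub_sorted ltnW) s_sorted /(nthP 0)[j j_lt <-]; rewrite -nth_last.
apply: (sorted_leq_nth leq_trans leqnn 0 s_sorted); rewrite ?inE //.
  by rewrite (ltn_predK j_lt).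
by rewrite -ltnS (ltn_predK j_lt).
Qed.

Lemma count_iota_reflect (k : nat) (p : pred nat) :
  count (fun x => p (k - x)) (iota 1 (k - 1)) = count p (iota 1 (k - 1)).
Proof.
rewrite -(count_map (fun x => k - x)); apply/permP/uniq_perm.
- by rewrite map_inj_in_uniq ?iota_uniq // => x y; rewrite !mem_iota; lia.
- exact: iota_uniq.
move=> y; apply/mapP/idP => [[x] | ]; rewrite !mem_iota.
  by move=> ? ->; lia.
by move=> ?; exists (k - y); rewrite ?mem_iota; lia.
Qed.

Section Gapset.

Context {G : seq nat} (G_gapset : is_gapset G).

Let F := frobenius G.

Lemma gapset_half (x : nat) : 0 < x -> x + x \in G -> x \in G.
Proof. by have [_ [_ split]] := G_gapset; move=> x_gt0 /split[] // ->. Qed.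

Lemma gapset_le_frobenius (y : nat) : y \in G -> y <= F.
Proof. by case: G_gapset => G_sorted _; apply: sorted_ltn_le_last. Qed.

Lemma frobenius_mem : 0 < genus G -> F \in G.
Proof. by rewrite /F /frobenius; case: G => [|x s] //= _; apply: mem_last. Qed.

Lemma count_gaps_below_frobenius :
  0 < genus G -> count (mem G) (iota 1 (F - 1)) = (genus G).-1.
Proof.
move=> G_ne; have [G_sorted [G_pos _]] := G_gapset.
have F_gt0 : 0 < F by apply/G_pos/frobenius_mem.
have G_perm : perm_eq G (filter (mem G) (iota 1 F)).
  apply: uniq_perm; first exact: (sorted_uniq ltn_trans ltnn).
    by rewrite filter_uniq ?iota_uniq.
  move=> y; rewrite mem_filter mem_iota /=.
  case yG: (y \in G) => //=.
  by have := G_pos y yG; have := gapset_le_frobenius y yG; lia.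
have iota_F : iota 1 F = rcons (iota 1 (F - 1)) F.
  by rewrite -cats1 -[X in iota 1 X](subnK F_gt0) iotaD add1n subn1 prednK.
rewrite /genus (perm_size G_perm) size_filter iota_F -cats1 count_cat /=.
by rewrite frobenius_mem // addn0 addn1.
Qed.

Lemma count_gap_or_reflected : 0 < genus G ->
  count (predU (mem G) (fun y => F - y \in G)) (iota 1 (F - 1)) = F - 1.
Proof.
move=> G_ne; have [_ [_ split]] := G_gapset.
rewrite -[RHS](size_iota 1) -count_predT; apply: eq_in_count => y.
rewrite mem_iota => /andP[y_gt0 y_lt] /=.
have : y + (F - y) \in G by rewrite subnKC ?frobenius_mem //; lia.
by case/split=> [||->|->]; rewrite ?orbT //; lia.
Qed.

Lemma pseudo_symmetric_complementary_gaps (x : nat) : pseudo_symmetric G ->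
  0 < x < F -> x \in G -> F - x \in G -> x + x = F.
Proof.
move=> G_ps x_range xG Fx_G; have F_ps : F = 2 * genus G - 2 := G_ps.
have G_ne : 0 < genus G by lia.
have [m G_genus] : exists m, genus G = m.+1 by exists (genus G).-1; rewrite prednK.
have F_m : F = m + m by lia.
set s := iota 1 (F - 1); set both := predI (mem G) (fun y => F - y \in G).
have count_both : count both s = 1.
  have := count_predUI (mem G) (fun y => F - y \in G) s.
  rewrite count_gap_or_reflected // count_iota_reflect.
  by rewrite count_gaps_below_frobenius // G_genus -/both; lia.
have mG : m \in G by apply: gapset_half; [lia | rewrite -F_m frobenius_mem].
have Fm : F - m = m by lia.
have both_m : m \in filter both s by rewrite mem_filter /= Fm mG mem_iota; lia.
have both_x : x \in filter both s by rewrite mem_filter /= xG Fx_G mem_iota; lia.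
rewrite -size_filter in count_both.
move: both_m both_x; case: (filter both s) count_both => [|y [|//]] //= _.
by rewrite !inE F_m => /eqP-> /eqP->.
Qed.

Lemma gapset_mem_below_jump (a b k : nat) : b \in G ->
  (forall y, a < y < b -> y \notin G) -> 0 < k < b - a -> k \in G.
Proof.
move=> bG jump k_range; have [_ [_ split]] := G_gapset.
have : b - k + k \in G by rewrite subnK //; lia.
case/split=> //; try lia.
by move=> bk_G; have := jump (b - k); rewrite bk_G; lia.
Qed.

End Gapset.

Section PureSparse.

Variables (n a : nat) (G : seq nat).
Hypotheses (n_gt0 : 0 < n) (G_gapset : is_gapset G) (G_ps : pseudo_symmetric G).
Hypothesis G_genus : genus G = 3 * n + 1.
Hypotheses (aG : a \in G) (bG : a + 2 * n \in G).
Hypothesis jump : forall y, a < y < a + 2 * n -> y \notin G.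

Let F_6n : frobenius G = 6 * n.
Proof. by have : frobenius G = 2 * genus G - 2 := G_ps; rewrite G_genus; lia. Qed.

Let complementary x : 0 < x < 6 * n -> x \in G -> 6 * n - x \in G -> x = 3 * n.
Proof.
rewrite -F_6n => x_range xG Fx_G.
by have := pseudo_symmetric_complementary_gaps G_gapset x G_ps x_range xG Fx_G; lia.
Qed.

Let small_gap k : 0 < k < 2 * n -> k \in G.
Proof. by move=> k_range; apply: (gapset_mem_below_jump G_gapset a _ k bG jump); lia. Qed.

Let F_mem : 6 * n \in G.
Proof. by rewrite -F_6n frobenius_mem // G_genus addn1. Qed.

Let three_n_mem : 3 * n \in G.
Proof. by apply: (gapset_half G_gapset); [lia | rewrite -mulnDl]. Qed.

Let half_four_n : 4 * n \in G -> 2 * n \in G.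
Proof. by move=> four_n_mem; apply: (gapset_half G_gapset); [lia | rewrite -mulnDl]. Qed.

Lemma jump_ge_2n : 2 * n <= a.
Proof.
have [a_succ | a_succ_neq] := eqVneq (a + 1) (2 * n); last first.
  rewrite leqNgt; apply/negP => a_lt.
  by have := jump (a + 1); rewrite small_gap; lia.
have two_n_gap : 2 * n \notin G by apply: jump; lia.
have [_ [_ split]] := G_gapset.
have : 2 * n + 4 * n \in G by rewrite -mulnDl.
case/split=> [||two_n_mem|/half_four_n two_n_mem]; try lia;
  by rewrite two_n_mem in two_n_gap.
Qed.

Lemma jump_ge_3n : 3 * n <= a.
Proof.
rewrite leqNgt; apply/negP => a_lt.
by have := jump (3 * n); rewrite three_n_mem; have := jump_ge_2n; lia.
Qed.

Lemma pseudo_symmetric_no_2n_jump : False.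
Proof.
have a_ge := jump_ge_3n.
have [b_lt | b_ge] := ltnP (a + 2 * n) (6 * n).
  by have := complementary (a + 2 * n); rewrite bG small_gap; lia.
have a_4n : a = 4 * n by have := gapset_le_frobenius G_gapset _ bG; rewrite F_6n; lia.
have := complementary a; rewrite aG (_ : 6 * n - a = 2 * n) ?half_four_n -?a_4n //; lia.
Qed.

End PureSparse.

Theorem mainTheorem7 (n : nat) (G : seq nat) :
  0 < n -> is_gapset G -> genus G = 3 * n + 1 ->
  pure_sparse (2 * n) G -> ~ pseudo_symmetric G.
Proof.
move=> n_gt0 G_gapset G_genus [_ [i [i_lt jump_2n]]] G_ps.
have G_sorted : sorted ltn G by case: G_gapset.
have a_lt_b : nth 0 G i < nth 0 G i.+1.
  by rewrite (sorted_ltn_nth_mono G_sorted) ?inE // ltnW.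
have bE : nth 0 G i.+1 = nth 0 G i + 2 * n by lia.
apply: (pseudo_symmetric_no_2n_jump n (nth 0 G i) G n_gt0 G_gapset G_ps G_genus).
- by rewrite mem_nth // ltnW.
- by rewrite -bE mem_nth.
- by move=> y; rewrite -bE; apply: sorted_ltn_notin_between.
Qed.
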